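(* Let $\mathcal{H}$ be a hypertree, $T$ a host tree of $\mathcal{H}$, and $u,v$ two different vertices of $\mathcal{H}$. Then $uv$ is an edge of some host tree of $\mathcal{H}$ if and only if there exists an edge $e$ of the path $T[u,v]$ such that $I_\mathcal{H}(uv)=I_\mathcal{H}(e)$.
   Context: A hypergraph $\mathcal{H}$ has a finite vertex set $V(\mathcal{H})$ and a finite family of nonempty subsets (edges). A host tree is a tree on $V(\mathcal{H})$ in which every edge induces a connected subgraph; a hypertree is a hypergraph with a host tree. For $V'\subseteq V(\mathcal{H})$, $I_\mathcal{H}(V')$ is the intersection of all edges of $\mathcal{H}$ containing $V'$, or $V(\mathcal{H})$ if none does; for a pair, $I_\mathcal{H}(xy)=I_\mathcal{H}(\{x,y\})$, and for a tree edge $e=xy$, $I_\mathcal{H}(e)=I_\mathcal{H}(\{x,y\})$. $T[u,v]$ is the path in $T$ from $u$ to $v$. *)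

From mathcomp Require Import all_boot.
Set Implicit Arguments. Unset Strict Implicit. Unset Printing Implicit Defensive.

(* A hypergraph on the finite vertex set V (the whole type) is a finite
   family (sequence, repetitions allowed) of nonempty subsets. *)
Definition hypergraph (V : finType) (H : seq {set V}) : Prop :=
  forall e, e \in H -> e != set0.

Definition upath (V : finType) (G : rel V) (x : V) (p : seq V) : bool :=
  path G x p && uniq (x :: p).

Definition is_tree (V : finType) (G : rel V) : Prop :=
  symmetric G /\ irreflexive G /\
  forall x y : V, exists! p : seq V, upath G x p /\ last x p = y.

Definition induces_connected (V : finType) (G : rel V) (S : {set V}) : Prop :=
  forall x y, x \in S -> y \in S ->
    exists p : seq V, [/\ path G x p, last x p = y & all (fun z => z \in S) p].

Definition host_tree (V : finType) (H : seq {set V}) (T : rel V) : Prop :=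
  is_tree T /\ forall e, e \in H -> induces_connected T e.

Definition hypertree (V : finType) (H : seq {set V}) : Prop :=
  hypergraph H /\ exists T, host_tree H T.

(* I_H(A): intersection of all edges containing A; the whole vertex set
   (setT, the empty intersection) if there is none. *)
Definition I_H (V : finType) (H : seq {set V}) (A : {set V}) : {set V} :=
  \bigcap_(e <- H | A \subset e) e.

From mathcomp Require Import all_boot.
Set Implicit Arguments. Unset Strict Implicit. Unset Printing Implicit Defensive.

(* Removing the edge uv from a host tree T' leaves two components, and the path
   T[u,v] crosses between them along some edge xy.  A hyperedge containing u and v
   contains all of T[u,v], hence x and y; a hyperedge containing x and y is
   T'-connected and so uses the only T'-edge between the components, uv.  Hence
   I(uv) = I(xy).  Conversely, if xy lies on T[u,v] and I(uv) = I(xy), then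
   T - xy + uv is a tree, and a hyperedge that used xy contains x and y, hence u
   and v, hence all of T[u,v], so it stays connected through x..u, uv, v..y. *)

Section Graphs.
Variable V : finType.
Implicit Types (G : rel V) (S : {set V}) (a b c d u v w x y z : V) (p q : seq V).

Definition edge_rel a b : rel V :=
  fun c d => ((c == a) && (d == b)) || ((c == b) && (d == a)).
Definition del_edge G a b : rel V := fun c d => G c d && ~~ edge_rel a b c d.
Definition add_edge G a b : rel V := fun c d => G c d || edge_rel a b c d.
Definition induced G S : rel V := fun c d => [&& G c d, c \in S & d \in S].

Lemma edge_relC a b : edge_rel a b =2 edge_rel b a.
Proof. by move=> c d; rewrite /edge_rel orbC. Qed.

Lemma edge_rel_sym a b : symmetric (edge_rel a b).
Proof. by move=> c d; rewrite /edge_rel orbC andbC [(c == a) && _]andbC. Qed.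

Lemma edge_rel_mem a b c d c' d' :
  edge_rel a b c d -> edge_rel a b c' d' -> c \in [:: c'; d'].
Proof.
by case/orP=> /andP[/eqP-> _] /orP[]/andP[/eqP-> /eqP->]; rewrite !inE eqxx ?orbT.
Qed.

Lemma edge_rel_in a b c d S :
  edge_rel a b c d -> c \in S -> d \in S -> (a \in S) && (b \in S).
Proof. by case/orP=> /andP[/eqP-> /eqP->] cS dS; rewrite cS dS. Qed.

Lemma edge_rel_uniq a b c d d' : edge_rel a b c d -> edge_rel a b c d' -> d = d'.
Proof.
by move=> /orP[]/andP[/eqP c_a /eqP d_b] /orP[]/andP[/eqP c_a' /eqP d_b']; congruence.
Qed.

Lemma edge_rel_refl a b : edge_rel a b a b.
Proof. by rewrite /edge_rel !eqxx. Qed.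

Lemma del_edgeC G a b : del_edge G a b =2 del_edge G b a.
Proof. by move=> c d; rewrite /del_edge edge_relC. Qed.

Lemma del_edge_sym G a b : symmetric G -> symmetric (del_edge G a b).
Proof. by move=> sG c d; rewrite /del_edge sG edge_rel_sym. Qed.

Lemma add_edge_sym G a b : symmetric G -> symmetric (add_edge G a b).
Proof. by move=> sG c d; rewrite /add_edge sG edge_rel_sym. Qed.

Lemma induced_sym G S : symmetric G -> symmetric (induced G S).
Proof. by move=> sG c d; rewrite /induced sG; congr andb; exact: andbC. Qed.

Lemma path_del_edge G a b c q :
  a \notin c :: q -> path G c q -> path (del_edge G a b) c q.
Proof.
move=> na; apply: (@sub_in_path _ (predC1 a)); last first.
  by apply/allP => z zq /=; apply: contraNneq na => <-.
move=> w z; rewrite !inE => wa za Gwz; rewrite /del_edge Gwz /=.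
apply/negP => /(edge_rel_mem (edge_rel_refl a b)).
by rewrite !inE ![a == _]eq_sym (negbTE wa) (negbTE za).
Qed.

Lemma path_crossing G (P : pred V) c q :
  path G c q -> ~~ P c -> P (last c q) ->
  exists x y, [/\ G x y, ~~ P x, P y & infix [:: x; y] (c :: q)].
Proof.
elim: q c => [|w q IH] c /=; first by move=> _ /negbTE ->.
case/andP=> Gcw Gq Pc Pq; case Pw: (P w).
  by exists c, w; split => //; apply: (prefix_infix [:: c; w]).
have [x [y [Gxy Px Py xy_q]]] := IH w Gq (negbT Pw) Pq.
by exists x, y; split => //; apply: infix_trans xy_q (infix_cons _ _).
Qed.

Lemma infix_pairP c q x y :
  infix [:: x; y] (c :: q) -> exists q1 q2, q = q1 ++ y :: q2 /\ last c q1 = x.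
Proof.
case/infixP=> [[|c' s] [s' /=]] [-> Eq]; first by exists [::], s'.
by exists (rcons s x), s'; rewrite cat_rcons last_rcons.
Qed.

Lemma upath_split_at_edge G c q x y :
  upath G c q -> infix [:: x; y] (c :: q) ->
  exists q1 q2, [/\ q = q1 ++ y :: q2, last c q1 = x, G x y,
    path (del_edge G x y) c q1 & path (del_edge G x y) y q2].
Proof.
move=> /andP[Gq Uq] /infix_pairP[q1 [q2 [qE q1x]]]; exists q1, q2.
move: Uq; rewrite qE -cat_cons cat_uniq => /and3P[_ D12 _].
move: Gq; rewrite qE cat_path q1x => /andP[Gq1 /andP[Gxy Gq2]]; split=> //.
  rewrite (eq_path (del_edgeC G x y)); apply: path_del_edge Gq1.
  by apply: contra D12 => yq1; apply/hasP; exists y; rewrite ?inE ?eqxx.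
apply: path_del_edge Gq2; apply: contra D12 => xq2; apply/hasP; exists x => //.
by rewrite -q1x mem_last.
Qed.

Lemma connect_del_edge G a b z :
  connect G z a -> connect (del_edge G a b) z a || connect (del_edge G a b) z b.
Proof.
case/connectP=> p; elim: p z => [|w p IH] z /= => [_ ->|]; first by rewrite connect0.
case/andP=> Gzw /IH Cw /Cw {}Cw; case Dzw: (del_edge G a b z w).
  by case/orP: Cw => Cw; rewrite (connect_trans (connect1 Dzw) Cw) ?orbT.
move: Dzw; rewrite /del_edge Gzw /= => /negbFE.
by case/orP=> /andP[/eqP-> _]; rewrite connect0 ?orbT.
Qed.

Lemma connect_induced_path G S c q :
  path G c q -> {subset c :: q <= S} -> connect (induced G S) c (last c q).
Proof.
move=> Gq qS; apply/connectP; exists q => //.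
apply: (@sub_in_path _ (mem S)) Gq; last by apply/allP.
by move=> w z wS zS Gwz; rewrite /induced Gwz wS zS.
Qed.

Lemma induces_connectedP G S :
  induces_connected G S <-> {in S &, forall c d, connect (induced G S) c d}.
Proof.
split=> [SG c d cS dS | SG c d cS dS].
  have [q [Gq <- qS]] := SG c d cS dS.
  by apply: connect_induced_path => // z; rewrite inE => /predU1P[->|/(allP qS)].
have /connectP[q Iq ->] := SG c d cS dS; exists q; split => //.
  by apply: sub_path Iq => w z /andP[].
by elim: q c Iq {cS} => //= w q IH c /andP[/and3P[_ _ ->] /IH].
Qed.

Definition forest G :=
  forall x p q, upath G x p -> upath G x q -> last x p = last x q -> p = q.

Lemma treeP G :
  is_tree G <-> [/\ symmetric G, irreflexive G, forest G & forall x y, connect G x y].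
Proof.
split=> [[sG [irrG treeG]] | [sG irrG fG cG]].
  split=> // [x p q Gp Gq Lpq | x y].
    have [r [_ r_uniq]] := treeG x (last x q).
    by rewrite -(r_uniq p) ?(r_uniq q).
  by have [p [[/andP[Gp _] <-] _]] := treeG x y; apply/connectP; exists p.
do 2!split=> //; move=> x y; have /connectP[p Gp ->] := cG x y.
case: (shortenP Gp) => q Gq Uq _; have Gq' : upath G x q by rewrite /upath Gq.
by exists q; split=> [|r [Ur Lr]]; last exact: fG Gq' Ur (esym Lr).
Qed.

Lemma sub_forest G G' : subrel G' G -> forest G -> forest G'.
Proof.
move=> G'G fG x p q /andP[G'p Up] /andP[G'q Uq]; apply: fG.
  by rewrite /upath (sub_path G'G G'p).
by rewrite /upath (sub_path G'G G'q).
Qed.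

Lemma tree_cut G a b : is_tree G -> G a b -> ~~ connect (del_edge G a b) a b.
Proof.
case/treeP=> _ irrG fG _ Gab; apply/negP => /connectP[q Dq].
case: (shortenP Dq) => q' Dq' Uq' _ Lq'.
have ab : a != b by apply: contraTneq Gab => ->; rewrite irrG.
have q'E : q' = [:: b].
  apply: (fG a); last by rewrite -Lq'.
    by rewrite /upath Uq' (sub_path _ Dq') // => c d /andP[].
  by rewrite /upath /= Gab inE ab.
by move: Dq'; rewrite q'E /= /del_edge edge_rel_refl andbF.
Qed.

Lemma add_edge_path_split G u v c q :
  uniq (c :: q) -> path (add_edge G u v) c q ->
  path G c q \/ exists q1 w q2,
    [/\ q = q1 ++ w :: q2, path G c q1, path G w q2 & edge_rel u v (last c q1) w].
Proof.
elim: q c => [|w q IH] c; first by left.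
rewrite cons_uniq => /andP[cq Uq] /andP[Acw Aq].
have [Gcw | nGcw] := boolP (G c w); last have Ecw : edge_rel u v c w.
- have [Gq | [q1 [w' [q2 [-> Gq1 Gq2 Ew']]]]] := IH w Uq Aq.
    by left; rewrite /= Gcw.
  by right; exists (w :: q1), w', q2; rewrite /= Gcw.
- by move: Acw; rewrite /add_edge (negbTE nGcw).
have [Gq | [q1 [w' [q2 [qE _ _ Ew']]]]] := IH w Uq Aq; first by right; exists [::], w, q.
case/negP: cq; have := edge_rel_mem Ecw Ew'; rewrite qE !inE => /orP[]/eqP->.
  by rewrite -in_cons -cat_cons mem_cat mem_last.
by rewrite mem_cat inE eqxx !orbT.
Qed.

Lemma forest_add_edge G u v :
  symmetric G -> forest G -> ~~ connect G u v -> forest (add_edge G u v).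
Proof.
move=> sG fG nuv; have cs := sym_connect_sym sG.
(* u and v lie in different components of G, so two simple paths of G + uv with
   the same ends use the new edge in the same direction or not at all. *)
have not_conn m w : edge_rel u v m w -> ~~ connect G m w.
  by case/orP=> /andP[/eqP-> /eqP->]; rewrite // cs.
have conn_path c q : path G c q -> connect G c (last c q).
  by move=> Gq; apply/connectP; exists q.
have crossing_far c q1 w q2 : path G c q1 -> path G w q2 ->
    edge_rel u v (last c q1) w -> ~~ connect G c (last w q2).
  move=> Gq1 Gq2 /not_conn; apply: contra => Cd.
  have Cmc : connect G (last c q1) c by rewrite cs conn_path.
  have Cdw : connect G (last w q2) w by rewrite cs conn_path.
  exact: connect_trans Cmc (connect_trans Cd Cdw).
move=> c p q /andP[Ap Up] /andP[Aq Uq] Lpq.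
have [Gp | [p1 [w [p2 [pE Gp1 Gp2 Ew]]]]] := add_edge_path_split Up Ap;
have [Gq | [q1 [w' [q2 [qE Gq1 Gq2 Ew']]]]] := add_edge_path_split Uq Aq.
- by apply: (fG c); rewrite /upath ?Gp ?Gq.
- case/negP: (crossing_far _ _ _ _ Gq1 Gq2 Ew').
  by rewrite (_ : last w' q2 = last c p) ?conn_path // Lpq qE last_cat.
- case/negP: (crossing_far _ _ _ _ Gp1 Gp2 Ew).
  by rewrite (_ : last w p2 = last c q) ?conn_path // -Lpq pE last_cat.
have Cmm : connect G (last c p1) (last c q1).
  by rewrite (connect_trans _ (conn_path _ _ Gq1)) // cs conn_path.
have mE : last c p1 = last c q1.
  have := edge_rel_mem Ew Ew'; rewrite !inE => /orP[/eqP //|/eqP mE].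
  by have := not_conn _ _ Ew'; rewrite cs -mE Cmm.
have wE : w = w' by apply: (edge_rel_uniq Ew); rewrite mE.
subst w'; move: Up Uq Lpq; rewrite pE qE !last_cat -!cat_cons !cat_uniq.
case/and3P=> Up1 _ Up2 /and3P[Uq1 _ Uq2] Lpq.
have -> : p1 = q1 by apply: (fG c); rewrite /upath ?Gp1 ?Gq1.
by congr (_ ++ _ :: _); apply: (fG w); rewrite /upath ?Gp2 ?Gq2.
Qed.

Lemma connect_add_edge G u v :
  symmetric G -> (forall z, connect G z u || connect G z v) ->
  forall x y, connect (add_edge G u v) x y.
Proof.
move=> sG cG; set G' := add_edge G u v.
have cs' : connect_sym G' := sym_connect_sym (add_edge_sym u v sG).
have sub : subrel (connect G) (connect G').
  by apply: connect_sub => x y Gxy; apply: connect1; rewrite /G' /add_edge Gxy.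
have Cvu : connect G' v u.
  by apply: connect1; rewrite /G' /add_edge edge_rel_sym edge_rel_refl orbT.
have Cu z : connect G' z u.
  by case/orP: (cG z) => /sub // Czv; apply: connect_trans Czv Cvu.
by move=> x y; rewrite (connect_trans (Cu x)) // cs'.
Qed.

Lemma add_edge_irr G u v : irreflexive G -> u != v -> irreflexive (add_edge G u v).
Proof.
move=> irrG uv c; rewrite /add_edge irrG /=; apply/negbTE.
by apply: contra uv => /orP[]/andP[/eqP<- /eqP<-].
Qed.

Lemma tree_exchange G a b u v :
  is_tree G -> G a b -> connect (del_edge G a b) u a -> connect (del_edge G a b) v b ->
  is_tree (add_edge (del_edge G a b) u v).
Proof.
move=> treeG Gab Cua Cvb; have [sG irrG fG cG] := (treeP G).1 treeG.
set G0 := del_edge G a b in Cua Cvb *.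
have cs : connect_sym G0 := sym_connect_sym (del_edge_sym a b sG).
have nuv : ~~ connect G0 u v.
  apply: contra (tree_cut treeG Gab) => Cuv.
  by rewrite (connect_trans _ (connect_trans Cuv Cvb)) // cs.
apply/treeP; split.
- exact: add_edge_sym (del_edge_sym a b sG).
- apply: add_edge_irr; first by move=> c; rewrite /G0 /del_edge irrG.
  by apply: contraNneq nuv => ->.
- apply: forest_add_edge (del_edge_sym a b sG) _ nuv.
  by apply: sub_forest fG => c d /andP[].
- apply: connect_add_edge (del_edge_sym a b sG) _ => z.
  have Cau : connect G0 a u by rewrite cs.
  have Cbv : connect G0 b v by rewrite cs.
  case/orP: (connect_del_edge b (cG z a)) => Cz.
    by rewrite (connect_trans Cz Cau).
  by rewrite (connect_trans Cz Cbv) orbT.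
Qed.

Lemma tree_path_sub G S c q :
  is_tree G -> induces_connected G S -> c \in S -> last c q \in S ->
  upath G c q -> {subset c :: q <= S}.
Proof.
case/treeP=> _ _ fG _ SG cS dS Gq.
have [r [Gr + rS]] := SG c (last c q) cS dS.
case: (shortenP Gr) => r' Gr' Ur' r'r Lr'.
have -> : q = r' by apply: (fG c); rewrite // /upath Gr' Ur'.
by move=> z; rewrite inE => /predU1P[->|/r'r/(allP rS)].
Qed.

Lemma induces_connected_cut G S u v x y :
  induces_connected G S -> x \in S -> y \in S -> ~~ connect (del_edge G u v) x y ->
  (u \in S) && (v \in S).
Proof.
move=> SG xS yS nxy; have [r [Gr Lr rS]] := SG x y xS yS.
pose P := connect (del_edge G u v)^~ y.
have [|c [d [Gcd Pc Pd cd_r]]] := path_crossing (P := P) Gr nxy.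
  by rewrite /P /= Lr connect0.
have rS' : {subset x :: r <= S} by move=> z; rewrite inE => /predU1P[->|/(allP rS)].
have [cS dS] : c \in S /\ d \in S.
  by split; apply/rS'/(mem_infix cd_r); rewrite !inE eqxx ?orbT.
case Dcd: (del_edge G u v c d).
  by rewrite /P /= (connect_trans (connect1 Dcd) Pd) in Pc.
by apply: edge_rel_in cS dS; move: Dcd; rewrite /del_edge Gcd => /negbFE.
Qed.

Lemma induces_connected_del_edge G G' S a b :
  symmetric G' -> subrel (del_edge G a b) G' -> induces_connected G S ->
  (a \in S -> b \in S -> connect (induced G' S) a b) -> induces_connected G' S.
Proof.
move=> sG' GG' /induces_connectedP SG Cab; apply/induces_connectedP => c d cS dS.
have csI := sym_connect_sym (induced_sym S sG').
apply: connect_sub (SG c d cS dS) => w z /and3P[Gwz wS zS].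
case Dwz: (del_edge G a b w z); first by apply: connect1; rewrite /induced wS zS GG'.
move: Dwz wS zS; rewrite /del_edge Gwz => /negbFE /orP[]/andP[/eqP-> /eqP->] aS bS.
  exact: Cab.
by rewrite csI Cab.
Qed.
End Graphs.

Section IntersectionHull.
Variables (V : finType) (H : seq {set V}).
Implicit Types (A B e : {set V}).

Lemma sub_I_H A : A \subset I_H H A.
Proof.
apply: (big_ind (fun B => A \subset B)) => [|B C AB AC|e //].
  exact: subsetT.
by rewrite subsetI AB.
Qed.

Lemma I_H_sub A e : e \in H -> A \subset e -> I_H H A \subset e.
Proof. by move=> eH Ae; rewrite /I_H (big_rem e) //= Ae subsetIl. Qed.

Lemma eq_I_H A B : {in H, forall e, (A \subset e) = (B \subset e)} -> I_H H A = I_H H B.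
Proof.
move=> AB; rewrite /I_H [LHS]big_seq_cond [RHS]big_seq_cond.
by apply: eq_bigl => e; case eH: (e \in H); rewrite //= AB.
Qed.
End IntersectionHull.

Section HostTrees.
Variables (V : finType) (H : seq {set V}).
Implicit Types (T : rel V) (u v x y : V) (p : seq V).

Lemma host_tree_edge_on_path T T' u v p :
  host_tree H T -> host_tree H T' -> T' u v -> upath T u p -> last u p = v ->
  exists x y, infix [:: x; y] (u :: p) /\ I_H H [set u; v] = I_H H [set x; y].
Proof.
move=> [treeT HT] [treeT' HT'] T'uv Up pv.
pose P := connect (del_edge T' u v)^~ v.
have [|x [y [_ Px Py xy_p]]] :=
  path_crossing (P := P) (proj1 (andP Up)) (tree_cut treeT' T'uv).
  by rewrite pv /P /= connect0.
exists x, y; split => //; apply: eq_I_H => e He; rewrite !subUset !sub1set.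
apply/andP/andP => [[ue ve] | [xe ye]].
  have pe : {subset u :: p <= e}.
    by apply: tree_path_sub treeT (HT e He) ue _ Up; rewrite pv.
  by split; apply/pe/(mem_infix xy_p); rewrite !inE eqxx ?orbT.
apply/andP/(induces_connected_cut (HT' e He) xe ye).
by apply: contra Px => Cxy; apply: connect_trans Cxy Py.
Qed.

Lemma host_tree_exchange T u v p x y :
  host_tree H T -> upath T u p -> last u p = v -> infix [:: x; y] (u :: p) ->
  I_H H [set u; v] = I_H H [set x; y] ->
  host_tree H (add_edge (del_edge T x y) u v).
Proof.
move=> [treeT HT] Up pv xy_p I_uv_xy; have [sT _ _ _] := (treeP T).1 treeT.
have [p1 [p2 [pE p1x Txy T0p1 T0p2]]] := upath_split_at_edge Up xy_p.
have p2v : last y p2 = v by rewrite -pv pE last_cat.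
set T0 := del_edge T x y in T0p1 T0p2 *; set T' := add_edge T0 u v.
have T0T' : subrel T0 T' by move=> c d T0cd; rewrite /T' /add_edge T0cd.
split.
  apply: tree_exchange treeT Txy _ _; first by apply/connectP; exists p1.
  by rewrite (sym_connect_sym (del_edge_sym x y sT)); apply/connectP; exists p2.
move=> e He; apply: induces_connected_del_edge (HT e He) _ => [||xe ye].
- exact/add_edge_sym/del_edge_sym.
- exact: T0T'.
have /andP[ue ve] : (u \in e) && (v \in e).
  rewrite -!sub1set -subUset; apply: subset_trans (sub_I_H H _) _.
  by rewrite I_uv_xy I_H_sub // subUset !sub1set xe ye.
have pe : {subset u :: p <= e} by apply: tree_path_sub treeT (HT e He) ue _ Up; rewrite pv.
have Cux : connect (induced T' e) u x.
  rewrite -p1x; apply: connect_induced_path (sub_path T0T' T0p1) _ => z z_p1.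
  by apply: pe; move: z_p1; rewrite pE -cat_cons mem_cat => ->.
have Cyv : connect (induced T' e) y v.
  rewrite -p2v; apply: connect_induced_path (sub_path T0T' T0p2) _ => z z_p2.
  by apply: pe; rewrite pE -cat_cons mem_cat z_p2 orbT.
have Iuv : induced T' e u v by rewrite /induced ue ve /T' /add_edge edge_rel_refl orbT.
have csI : connect_sym (induced T' e).
  exact/sym_connect_sym/induced_sym/add_edge_sym/del_edge_sym.
rewrite csI in Cux; apply: connect_trans Cux (connect_trans (connect1 Iuv) _).
by rewrite csI.
Qed.
End HostTrees.

Theorem mainTheorem11 (V : finType) (H : seq {set V}) (T : rel V) (u v : V) :
  hypertree H -> host_tree H T -> u != v ->
  (exists T' : rel V, host_tree H T' /\ T' u v) <->
  (exists p : seq V, [/\ upath T u p, last u p = v &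
     exists x y : V, infix [:: x; y] (u :: p) /\
       I_H H [set u; v] = I_H H [set x; y]]).
Proof.
move=> _ HT _; split=> [[T' [HT' T'uv]] | [p [Up pv [x [y [xy_p I_uv_xy]]]]]].
  have [_ [_ treeT]] := HT.1; have [p [[Up pv] _]] := treeT u v.
  by exists p; split=> //; apply: host_tree_edge_on_path HT HT' T'uv Up pv.
exists (add_edge (del_edge T x y) u v); split.
  exact: host_tree_exchange HT Up pv xy_p I_uv_xy.
by rewrite /add_edge edge_rel_refl orbT.
Qed.
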